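(* Let $\Pi_n$ be a PARITY$_n$ program such that no rule $y\leftarrow B$ of $\Pi_n$ has $y\in var(B)$ and every rule body of $\Pi_n$ is consistent. Then there is a standard PARITY$_n$ program $\Pi_n'$ (again with no rule $y\leftarrow B$ having $y\in var(B)$ and with all bodies consistent) such that $|\Pi_n'|\le|\Pi_n|$.
   Context: A rule element is one of $\top$, $\bot$, $x$, $not\ x$, $not\ not\ x$, where $x$ is a variable. A (canonical) rule is $H\leftarrow B$ with $H$ a variable or $\bot$ and $B$ a finite set of rule elements; a canonical program is a finite set of rules. For a body $B$, $var(B)=\{e\in B: e\text{ is a variable}\}$. For a set of variables $I$: $I\models\top$; $I\not\models\bot$; $I\models x$ iff $I\models not\ not\ x$ iff $x\in I$; $I\models not\ x$ iff $x\notin I$; $I\models B$ iff $I$ satisfies every element of $B$; $I$ is closed under $H\leftarrow B$ if $I\models B$ implies $I\models H$. The reduct $\Pi^I$ replaces $not\ not\ x$ by $\top$ if $x\in I$ else $\bot$, and $not\ x$ by $\top$ if $x\notin I$ else $\bot$; $I$ is an answer set of $\Pi$ if $I$ is the least set closed under all rules of $\Pi^I$; $Ans(\Pi)$ is the set of answer sets; $var(\Pi)$ the set of variables occurring in $\Pi$; $|\Pi|$ the number of rules. Strings $w\in\{0,1\}^n$ are identified with $\{x_i:w_i=1\}$; PARITY$_n$ is the set of strings in $\{0,1\}^n$ with an odd number of 1's; a PARITY$_n$ program is a canonical program $\Pi$ with $var(\Pi)=\{x_1,\dots,x_n\}$ and $Ans(\Pi)=$ PARITY$_n$. For a set $B$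 of rule elements, $S(B)=\{I\subseteq\{x_1,\dots,x_n\}: I\models B\}$; $B$ is consistent if $S(B)\neq\emptyset$. A PARITY$_n$ program $\Pi$ is standard if for every rule $x\leftarrow B\in\Pi$ with head a variable $x$: whenever $S(B\cup\{x\})$ has exactly one element, $not\ not\ x\notin B$. *)

From HB Require Import structures.
From mathcomp Require Import all_boot.
Set Implicit Arguments. Unset Strict Implicit. Unset Printing Implicit Defensive.

(* Variables x_1, ..., x_n are represented by i : 'I_n (x_{i+1} <-> i). *)
Inductive elem (n : nat) : Type :=
  | ETop | EBot
  | EPos of 'I_n
  | ENeg of 'I_n
  | ENN of 'I_n.        (* not not x *)
Arguments ETop {n}. Arguments EBot {n}.

Definition elem_code n (e : elem n) : bool + ('I_3 * 'I_n) :=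
  match e with
  | ETop => inl true | EBot => inl false
  | EPos i => inr (Ordinal (isT : 0 < 3), i)
  | ENeg i => inr (Ordinal (isT : 1 < 3), i)
  | ENN i => inr (Ordinal (isT : 2 < 3), i)
  end.
Definition elem_decode n (c : bool + ('I_3 * 'I_n)) : elem n :=
  match c with
  | inl true => ETop | inl false => EBot
  | inr (k, i) => if val k == 0 then EPos i else if val k == 1 then ENeg i else ENN i
  end.
Lemma elem_codeK n : cancel (@elem_code n) (@elem_decode n).
Proof. by case. Qed.
HB.instance Definition _ n := Finite.copy (elem n) (can_type (@elem_codeK n)).

(* A rule H <- B : head None = bottom, Some x = variable x; body a finite set. *)
Definition rule n := (option 'I_n * {set elem n})%type.
Definition program n := {set rule n}.

Section Sem.
Variable n : nat.
Implicit Types (I : {set 'I_n}) (e : elem n) (B : {set elem n}) (P : program n).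

Definition sat_elem I e : bool :=
  match e with
  | ETop => true | EBot => false
  | EPos x => x \in I
  | ENeg x => x \notin I
  | ENN x => x \in I
  end.
Definition sat_body I B : bool := [forall e in B, sat_elem I e].
Definition sat_head I (h : option 'I_n) : bool :=
  if h is Some x then x \in I else false.
Definition closed_rule I (r : rule n) : bool := sat_body I r.2 ==> sat_head I r.1.
Definition closed_prog I P : bool := [forall r in P, closed_rule I r].

Definition reduct_elem I e : elem n :=
  match e with
  | ENN x => if x \in I then ETop else EBot
  | ENeg x => if x \notin I then ETop else EBot
  | _ => e
  end.
Definition reduct_rule I (r : rule n) : rule n :=
  (r.1, [set reduct_elem I e | e in r.2]).
Definition reduct I P : program n := [set reduct_rule I r | r in P].

Definition answer_set P I : Prop :=
  closed_prog I (reduct I P) /\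
  forall J, closed_prog J (reduct I P) -> I \subset J.

Definition elem_var e (x : 'I_n) : bool :=
  match e with
  | EPos y | ENeg y | ENN y => y == x
  | _ => false
  end.
Definition occurs_rule (r : rule n) x : bool :=
  (r.1 == Some x) || [exists e in r.2, elem_var e x].
Definition all_vars_occur P : Prop := forall x, exists2 r, r \in P & occurs_rule r x.

Definition parity_program P : Prop :=
  all_vars_occur P /\ forall I, answer_set P I <-> odd #|I|.

Definition S_of B : {set {set 'I_n}} := [set I | sat_body I B].
Definition consistent B : Prop := S_of B != set0.

Definition no_self_support P : Prop :=
  forall r, r \in P -> forall y, r.1 = Some y -> EPos y \notin r.2.
Definition all_bodies_consistent P : Prop := forall r, r \in P -> consistent r.2.

(* standard PARITY_n program (the parity condition is required separately) *)
Definition standard P : Prop :=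
  forall r, r \in P -> forall x, r.1 = Some x ->
    #|S_of (EPos x |: r.2)| = 1 -> ENN x \notin r.2.
End Sem.

From HB Require Import structures.
From mathcomp Require Import all_boot.
From Stdlib Require Import Setoid.
Set Implicit Arguments. Unset Strict Implicit. Unset Printing Implicit Defensive.

(* A non-standard rule x <- B has not not x in B and S(B u {x}) = {I0}, so I0
   is the only model of B.  If |I0| is even, I0 is no answer set and the rule
   can be dropped: it never fires for any other candidate, and it cannot
   rescue I0.  If |I0| is odd, delete not not x from the body instead: the
   reducts with respect to I0 do not change, and the only sets that satisfy
   the new body but not B are of the form I0 \ {x}, which have even size and
   are killed by the new rule (its body holds, its head x does not).  Each step
   keeps a PARITY program with no self-support and consistent bodies, adds no
   rule and removes a non-standard one, so iterating yields a standard
   program. *)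

Lemma forall_inU1 (T : finType) (a : T) (A : {set T}) (p : pred T) :
  [forall e in a |: A, p e] = p a && [forall e in A, p e].
Proof.
apply/forall_inP/andP => [h | [pa /forall_inP pA] e].
- split; first by apply: h; rewrite setU11.
  by apply/forall_inP => e eA; apply: h; rewrite setU1r.
- by rewrite in_setU1 => /predU1P [-> | /pA].
Qed.

Section AnswerSets.
Variable n : nat.
Implicit Types (I J K : {set 'I_n}) (B : {set elem n}) (r : rule n) (P Q : program n).

Definition sat_reduct I J B := [forall e in B, sat_elem J (reduct_elem I e)].
Definition closed_reduct I P J :=
  [forall r in P, sat_reduct I J r.2 ==> sat_head J r.1].

Lemma sat_body_setU1 K e B : sat_body K (e |: B) = sat_elem K e && sat_body K B.
Proof. exact: forall_inU1. Qed.

Lemma sat_body_setD1 K B e :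
  e \in B -> sat_body K B = sat_elem K e && sat_body K (B :\ e).
Proof. by move=> eB; rewrite -{1}(setD1K eB) sat_body_setU1. Qed.

Lemma sat_reductE I J B :
  sat_body J [set reduct_elem I e | e in B] = sat_reduct I J B.
Proof.
apply/forall_inP/forall_inP => h e; first by move=> eB; apply/h/imset_f.
by case/imsetP=> e' e'B ->; apply: h.
Qed.

Lemma closed_reductE I P J : closed_prog J (reduct I P) = closed_reduct I P J.
Proof.
apply/forall_inP/forall_inP => h r.
- by move=> rP; have := h _ (imset_f (reduct_rule I) rP); rewrite /closed_rule sat_reductE.
- by case/imsetP=> r' r'P ->; rewrite /closed_rule sat_reductE; apply: h.
Qed.

Lemma answer_setE P I :
  answer_set P I <->
  closed_reduct I P I /\ forall J, closed_reduct I P J -> I \subset J.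
Proof.
rewrite /answer_set closed_reductE.
by split=> -[cI minI]; split=> // J; move: (minI J); rewrite closed_reductE.
Qed.

Lemma answer_set_congr P Q I :
  (forall J, closed_reduct I P J = closed_reduct I Q J) ->
  answer_set P I <-> answer_set Q I.
Proof.
move=> eqPQ; rewrite !answer_setE eqPQ.
by split=> -[cI minI]; split=> // J; move: (minI J); rewrite eqPQ.
Qed.

Lemma sat_reduct_subset I J K B :
  J \subset K -> sat_reduct I J B -> sat_reduct I K B.
Proof.
move=> sJK /forall_inP h; apply/forall_inP => e /h.
by case: e => //= y; [apply: (subsetP sJK) | case: (y \in I) | case: (y \in I)].
Qed.

Lemma sat_reduct_id I B : sat_reduct I I B = sat_body I B.
Proof. by apply: eq_forallb => -[] //= y; case: (y \in I). Qed.

Lemma closed_reduct_setU1 I r P J :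
  closed_reduct I (r |: P) J =
  (sat_reduct I J r.2 ==> sat_head J r.1) && closed_reduct I P J.
Proof. exact: forall_inU1. Qed.

Lemma closed_reduct_setI I P J K :
  closed_reduct I P J -> closed_reduct I P K -> closed_reduct I P (J :&: K).
Proof.
move=> /forall_inP cJ /forall_inP cK; apply/forall_inP => -[h C] rP.
apply/implyP => satJK.
have := implyP (cJ _ rP) (sat_reduct_subset (subsetIl _ _) satJK).
have := implyP (cK _ rP) (sat_reduct_subset (subsetIr _ _) satJK).
by case: h {rP satJK} => [y|] //=; rewrite inE => -> ->.
Qed.

Lemma answer_set_sat P I r :
  answer_set P I -> r \in P -> sat_body I r.2 -> sat_head I r.1.
Proof.
case/answer_setE=> /forall_inP cI _ rP satI.
by apply: implyP (cI _ rP) _; rewrite sat_reduct_id.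
Qed.

Lemma answer_set_head P I y :
  answer_set P I -> y \in I -> exists2 r, r \in P & r.1 = Some y.
Proof.
case/answer_setE=> /forall_inP cI minI yI.
have [/exists_inP [r rP /eqP] | noHead] := boolP [exists r in P, r.1 == Some y].
  by exists r.
suff /subsetP/(_ y yI) : I \subset I :\ y by rewrite setD11.
apply/minI/forall_inP => -[h C] rP; apply/implyP => sat.
have := implyP (cI _ rP) (sat_reduct_subset (subD1set I y) sat).
case: h rP {sat} => [z|] //= rP zI.
rewrite in_setD1 zI andbT; apply: contraNneq noHead => zy.
by apply/exists_inP; exists (Some z, C); rewrite //= zy.
Qed.

Lemma answer_set_setU1_unsat I r Q :
  ~~ sat_body I r.2 -> answer_set (r |: Q) I <-> answer_set Q I.
Proof.
move=> unsat; rewrite !answer_setE.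
have noFire J : J \subset I -> sat_reduct I J r.2 = false.
  move=> sJI; apply: contraNF unsat => /(sat_reduct_subset sJI).
  by rewrite sat_reduct_id.
split=> -[cI minI].
- have cI' : closed_reduct I Q I by move: cI; rewrite closed_reduct_setU1 => /andP [].
  split=> // J cJ; apply: subset_trans (subsetIl J I); apply: minI.
  by rewrite closed_reduct_setU1 noFire ?subsetIr //= closed_reduct_setI.
- split; first by rewrite closed_reduct_setU1 noFire.
  by move=> J; rewrite closed_reduct_setU1 => /andP [_ /minI].
Qed.

Lemma answer_set_setU1_head I r Q :
  sat_head I r.1 -> answer_set Q I -> answer_set (r |: Q) I.
Proof.
move=> headI /answer_setE [cI minI]; apply/answer_setE.
split; first by rewrite closed_reduct_setU1 headI implybT.
by move=> J; rewrite closed_reduct_setU1 => /andP [_ /minI].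
Qed.

Lemma parity_programE P :
  parity_program P <-> forall I, answer_set P I <-> odd #|I|.
Proof.
split=> [[] // | parP]; split=> // y.
have /parP ans_y : odd #|[set y]| by rewrite cards1.
have [r rP ry] := answer_set_head ans_y (set11 y).
by exists r; rewrite // /occurs_rule ry eqxx.
Qed.

End AnswerSets.

Section NonStandardRule.
Variables (n : nat) (P : program n) (x : 'I_n) (B : {set elem n}) (I0 : {set 'I_n}).
Hypotheses (xB_in_P : (Some x, B) \in P) (nnx_in_B : ENN x \in B)
  (S_xB : S_of (EPos x |: B) = [set I0])
  (parP : forall I, answer_set P I <-> odd #|I|).

Let B' := B :\ ENN x.
Let Q := P :\ (Some x, B).

Lemma P_setD1K : P = (Some x, B) |: Q.
Proof. by rewrite setD1K. Qed.

Lemma sat_I0 : (x \in I0) && sat_body I0 B.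
Proof. by have := set11 I0; rewrite -S_xB inE sat_body_setU1. Qed.

Lemma sat_body_eq_I0 K : sat_body K B -> K = I0.
Proof.
move=> satK; apply/set1P; rewrite -S_xB inE sat_body_setU1 satK andbT.
by move: satK; rewrite (sat_body_setD1 _ nnx_in_B) => /andP [].
Qed.

Lemma setU1_sat_body K : sat_body K B' -> sat_body (x |: K) B.
Proof.
have /andP [xI0 satI0] := sat_I0.
have negx_notin_B : ENeg x \notin B.
  by apply: contraL xI0 => /(forall_inP satI0).
move=> /forall_inP satK; apply/forall_inP => e eB.
have [-> | neq] := eqVneq e (ENN x); first by rewrite /= setU11.
have := satK e; rewrite in_setD1 neq eB => /(_ isT).
case: e eB {neq} => //= y eB; rewrite in_setU1 => yK; rewrite ?yK ?orbT //.
by rewrite (negbTE yK) orbF; apply: contraNneq negx_notin_B => <-.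
Qed.

Lemma parity_delete : ~~ odd #|I0| -> forall K, answer_set Q K <-> odd #|K|.
Proof.
move=> evenI0 K; rewrite -parP.
have [/sat_body_eq_I0 -> | unsat] := boolP (sat_body K B).
  split=> [/(answer_set_setU1_head (r := (Some x, B))) | /parP].
    by rewrite -P_setD1K; apply; case/andP: sat_I0.
  by rewrite (negbTE evenI0).
by rewrite P_setD1K answer_set_setU1_unsat.
Qed.

Lemma sat_reduct_I0 J : sat_reduct I0 J B = sat_reduct I0 J B'.
Proof.
by rewrite /sat_reduct -{1}(setD1K nnx_in_B) forall_inU1 /=; case/andP: sat_I0 => ->.
Qed.

Lemma parity_replace :
  odd #|I0| -> forall K, answer_set ((Some x, B') |: Q) K <-> odd #|K|.
Proof.
move=> oddI0 K; rewrite -parP.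
have [/sat_body_eq_I0 -> | unsat] := boolP (sat_body K B).
  rewrite P_setD1K; apply: answer_set_congr => J.
  by rewrite !closed_reduct_setU1 /= sat_reduct_I0.
have [satK' | unsat'] := boolP (sat_body K B'); last first.
  by rewrite answer_set_setU1_unsat // P_setD1K answer_set_setU1_unsat.
have xK : x \notin K.
  by move: unsat; rewrite (sat_body_setD1 _ nnx_in_B) satK' andbT.
have evenK : ~~ odd #|K|.
  by move: oddI0; rewrite -(sat_body_eq_I0 (setU1_sat_body satK')) cardsU1 xK add1n.
split=> [/answer_set_sat /(_ (setU11 _ _) satK') /= | /parP].
  by rewrite (negbTE xK).
by rewrite (negbTE evenK).
Qed.

End NonStandardRule.

Definition standard_rule n (r : rule n) : bool :=
  if r.1 is Some x then (#|S_of (EPos x |: r.2)| == 1) ==> (ENN x \notin r.2)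
  else true.

Definition nonstandard n (P : program n) := [set r in P | ~~ standard_rule r].

Section Standardize.
Variable n : nat.
Implicit Types (r : rule n) (P Q : program n).

Lemma nonstandard_eq0 P : nonstandard P = set0 -> standard P.
Proof.
move=> P0 r rP x rx /eqP card1.
have : r \notin nonstandard P by rewrite P0 inE.
by rewrite inE rP negbK /standard_rule rx card1.
Qed.

Lemma nonstandard_setU1 r Q :
  standard_rule r -> nonstandard (r |: Q) = nonstandard Q.
Proof.
move=> stdr; apply/setP => s; rewrite !inE.
by case: eqP => [-> | _]; rewrite ?stdr ?andbF.
Qed.

Lemma card_nonstandardD1 r P :
  r \in nonstandard P -> #|nonstandard (P :\ r)| < #|nonstandard P|.
Proof.
move=> rN; suff -> : nonstandard (P :\ r) = nonstandard P :\ r.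
  exact: proper_card (properD1 rN).
by apply/setP => s; rewrite !inE andbA.
Qed.

Lemma no_self_support_subset P Q :
  Q \subset P -> no_self_support P -> no_self_support Q.
Proof. by move=> /subsetP sQP nssP r /sQP; apply: nssP. Qed.

Lemma all_bodies_consistent_subset P Q :
  Q \subset P -> all_bodies_consistent P -> all_bodies_consistent Q.
Proof. by move=> /subsetP sQP consP r /sQP; apply: consP. Qed.

Lemma remove_nonstandard_rule P r :
  parity_program P -> no_self_support P -> all_bodies_consistent P ->
  r \in nonstandard P ->
  exists P', [/\ parity_program P', no_self_support P',
    all_bodies_consistent P', #|P'| <= #|P| &
    #|nonstandard P'| < #|nonstandard P|].
Proof.
move=> /parity_programE parP nssP consP rN; have ltN := card_nonstandardD1 rN.
move: rN; rewrite inE => /andP [rP].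
have sQP : P :\ r \subset P by apply: subD1set.
have leQP : #|P :\ r| < #|P| by rewrite (cardsD1 r P) rP.
case: r rP ltN sQP leQP => [[x|] B] //= rP ltN sQP leQP.
rewrite /standard_rule /= negb_imply negbK => /andP [/cards1P [I0 S_xB] nnxB].
have [oddI0 | evenI0] := boolP (odd #|I0|); last first.
  exists (P :\ (Some x, B)); split; rewrite ?(ltnW leQP) //.
  - exact/parity_programE/(parity_delete rP nnxB S_xB parP).
  - exact: no_self_support_subset nssP.
  - exact: all_bodies_consistent_subset consP.
exists ((Some x, B :\ ENN x) |: P :\ (Some x, B)); split.
- exact/parity_programE/(parity_replace rP nnxB S_xB parP).
- move=> s /setU1P [-> y [<-] | /(subsetP sQP) sP]; last exact: nssP.
  by rewrite in_setD1 (negbTE (nssP _ rP _ erefl)) andbF.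
- move=> s /setU1P [-> | /(subsetP sQP) sP]; last exact: consP.
  apply/set0Pn; exists I0; rewrite inE.
  by case/andP: (sat_I0 S_xB) => _; rewrite (sat_body_setD1 _ nnxB) => /andP [].
- by rewrite cardsU1 (cardsD1 (Some x, B) P) rP leq_add2r leq_b1.
- by rewrite nonstandard_setU1 //= /standard_rule /= setD11 implybT.
Qed.

End Standardize.

Theorem mainTheorem12 (n : nat) (P : program n) :
  parity_program P -> no_self_support P -> all_bodies_consistent P ->
  exists P' : program n,
    [/\ parity_program P', standard P', no_self_support P',
        all_bodies_consistent P' & #|P'| <= #|P|].
Proof.
have [k] := ubnP #|nonstandard P|; elim: k P => // k IH P ltPk parP nssP consP.
have [/nonstandard_eq0 stdP | [r rN]] := set_0Vmem (nonstandard P).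
  by exists P.
have [P' [parP' nssP' consP' leP'P ltP'P]] :=
  remove_nonstandard_rule parP nssP consP rN.
have [P'' [parP'' stdP'' nssP'' consP'' leP''P']] :=
  IH P' (leq_trans ltP'P ltPk) parP' nssP' consP'.
by exists P''; split=> //; apply: leq_trans leP'P.
Qed.
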